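(* For any linear $t$-private PIR scheme ($t\ge1$), any file indices $i,i'\in[m]$ and any $\mathcal{F}\subseteq[m]$, $$\mathbb{E}_{\mathbf{q}\sim Q^i}\,|\mathrm{colsupp}(\mathbf{q}[\psi_\alpha(\mathcal{F}),:])|=\mathbb{E}_{\mathbf{q}\sim Q^{i'}}\,|\mathrm{colsupp}(\mathbf{q}[\psi_\alpha(\mathcal{F}),:])|,$$ where the expectations are over the query distributions for files $i$ and $i'$ respectively.
   Context: In a linear PIR scheme with $n$ servers and $m$ files (each with $\alpha$ stripes), the query for file $i$ is a random matrix $Q^i$ with realizations $\mathbf{q}\in\mathbb{F}^{\alpha m\times\beta n}$, and server $j$ receives the columns $\psi_\beta(\{j\})$, where $\psi_\beta(\mathcal{I})=\bigcup_{i\in\mathcal{I}}\{(i-1)\beta+1,\dots,i\beta\}$. Privacy implies in particular that the query received by each single server has the same distribution for every desired index. $\mathbf{q}[\mathcal{I},:]$ is the submatrix of rows $\mathcal{I}$; $\mathrm{colsupp}$ denotes the set of indices of nonzero columns. *)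

From mathcomp Require Import all_boot all_order all_algebra.
Set Implicit Arguments. Unset Strict Implicit. Unset Printing Implicit Defensive.
Import Order.TTheory GRing.Theory Num.Theory.
Local Open Scope ring_scope.

(* Indices are 0-based: row r of a (a*k)-row matrix belongs to block r %/ a,
   so psi a I = union over i in I of {i*a, ..., i*a + a - 1}
   (the paper's psi_a(I) with 1-based indexing). *)
Definition psi (a k : nat) (I : {set 'I_k}) : {set 'I_(a * k)} :=
  [set r : 'I_(a * k) | [exists i in I, (r %/ a)%N == val i]].

Definition colsupp (F : fieldType) (p c : nat) (rows : {set 'I_p})
  (q : 'M[F]_(p, c)) : {set 'I_c} :=
  [set j : 'I_c | [exists r in rows, q r j != 0]].

Definition is_dist (R : numDomainType) (T : finType) (P : {ffun T -> R}) : Prop :=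
  (forall x, 0 <= P x) /\ \sum_(x : T) P x = 1.

Definition agree_on (F : fieldType) (p c : nat) (cols : {set 'I_c})
  (q M : 'M[F]_(p, c)) : bool :=
  [forall r : 'I_p, forall j in cols, q r j == M r j].

(* t-privacy of the query family Q (Q i = distribution of the query matrix for
   desired file i, an (alpha m) x (beta n) matrix; server j receives the columns
   psi beta {j}): for every set T of at most t servers, the joint distribution
   of the columns psi beta T received by the servers in T does not depend on i. *)
Definition t_private (F : finFieldType) (R : numDomainType) (n m alpha beta t : nat)
  (Q : 'I_m -> {ffun 'M[F]_(alpha * m, beta * n) -> R}) : Prop :=
  forall (T : {set 'I_n}), (#|T| <= t)%N ->
  forall (i i' : 'I_m) (M : 'M[F]_(alpha * m, beta * n)),
    \sum_(q | agree_on (psi beta T) q M) Q i q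
    = \sum_(q | agree_on (psi beta T) q M) Q i' q.

Definition exp_colsupp (F : finFieldType) (R : numDomainType) (n m alpha beta : nat)
  (P : {ffun 'M[F]_(alpha * m, beta * n) -> R}) (Fs : {set 'I_m}) : R :=
  \sum_(q : 'M[F]_(alpha * m, beta * n)) P q * (#|colsupp (psi alpha Fs) q|)%:R.

From mathcomp Require Import all_boot all_order all_algebra.
Set Implicit Arguments. Unset Strict Implicit. Unset Printing Implicit Defensive.
Import Order.TTheory GRing.Theory Num.Theory.
Local Open Scope ring_scope.

(* The columns of q split into the servers' blocks psi_beta({j}), so
   |colsupp(q[psi_alpha(Fs), :])| is the sum over servers j of the number of
   nonzero columns inside block j.  That number is a function of the columns
   received by server j alone, whose distribution does not depend on the
   desired file by 1-privacy; hence each summand, and so the sum, has the same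
   expectation under Q^i and Q^i'. *)

Lemma eq_sum_mul_comp (R : pzRingType) (T U : finType) (f : T -> U)
    (P1 P2 : T -> R) (h : U -> R) :
  (forall x0, \sum_(x | f x == f x0) P1 x = \sum_(x | f x == f x0) P2 x) ->
  \sum_x P1 x * h (f x) = \sum_x P2 x * h (f x).
Proof.
move=> eq_fibers.
have fiberwise P : \sum_x P x * h (f x)
    = \sum_(u in [set f x | x in T]) (\sum_(x | f x == u) P x) * h u.
  rewrite (partition_big_imset f) /=; apply: eq_bigr => u _.
  by rewrite mulr_suml; apply: eq_bigr => x /eqP <-.
rewrite !fiberwise; apply: eq_bigr => _ /imsetP[x0 _ ->].
by rewrite eq_fibers.
Qed.

Section Blocks.
Variables a k : nat.

Lemma block_subproof (r : 'I_(a * k)) : (r %/ a < k)%N.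
Proof.
have := ltn_ord r; move: (nat_of_ord r) => v.
by case: a => [|a']; rewrite ?mul0n // ltn_divLR // mulnC.
Qed.

Definition block (r : 'I_(a * k)) : 'I_k := Ordinal (block_subproof r).

Lemma mem_psi (I : {set 'I_k}) (r : 'I_(a * k)) : (r \in psi a I) = (block r \in I).
Proof.
rewrite inE; apply/existsP/idP => [[i /andP[iI /eqP def_i]]|rI].
  by have -> : block r = i by apply: val_inj.
by exists (block r); rewrite rI eqxx.
Qed.

Lemma card_psi_blocks (S : {set 'I_(a * k)}) :
  #|S| = (\sum_(i < k) #|S :&: psi a [set i]|)%N.
Proof.
rewrite -sum1_card (partition_big block xpredT) //=; apply: eq_bigr => i _.
by rewrite -sum1_card; apply: eq_bigl => r; rewrite in_setI mem_psi in_set1.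
Qed.

End Blocks.

Section ColumnMask.
Variables (F : fieldType) (p c : nat).

Definition colmask (C : {set 'I_c}) (q : 'M[F]_(p, c)) : 'M[F]_(p, c) :=
  \matrix_(r, j) if j \in C then q r j else 0.

Lemma agree_on_colmask (C : {set 'I_c}) (q M : 'M[F]_(p, c)) :
  agree_on C q M = (colmask C q == colmask C M).
Proof.
apply/forallP/eqP => [agree_qM | /matrixP eq_qM r].
  apply/matrixP => r j; rewrite !mxE; case: ifP => // jC.
  exact/eqP/(forall_inP (agree_qM r)).
by apply/forall_inP => j jC; have := eq_qM r j; rewrite !mxE jC => ->.
Qed.

Lemma colsupp_colmask (rows : {set 'I_p}) (C : {set 'I_c}) (q : 'M[F]_(p, c)) :
  colsupp rows (colmask C q) = colsupp rows q :&: C.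
Proof.
apply/setP => j; rewrite !inE; case jC: (j \in C); rewrite ?andbT ?andbF.
  by apply: eq_existsb => r; rewrite mxE jC.
by apply/existsP => -[r]; rewrite mxE jC eqxx andbF.
Qed.

End ColumnMask.

Lemma exp_colsupp_servers (F : finFieldType) (R : numDomainType)
    (n m alpha beta : nat) (P : {ffun 'M[F]_(alpha * m, beta * n) -> R})
    (Fs : {set 'I_m}) :
  exp_colsupp P Fs = \sum_(j < n) \sum_q
    P q * (#|colsupp (psi alpha Fs) (colmask (psi beta [set j]) q)|)%:R.
Proof.
rewrite /exp_colsupp exchange_big /=; apply: eq_bigr => q _.
by rewrite card_psi_blocks natr_sum mulr_sumr; under eq_bigr do rewrite colsupp_colmask.
Qed.

Lemma t_private_server_view (F : finFieldType) (R : numDomainType)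
    (n m alpha beta t : nat) (Q : 'I_m -> {ffun 'M[F]_(alpha * m, beta * n) -> R})
    (j : 'I_n) (h : 'M[F]_(alpha * m, beta * n) -> R) :
  (1 <= t)%N -> t_private t Q -> forall i i' : 'I_m,
  \sum_q Q i q * h (colmask (psi beta [set j]) q)
    = \sum_q Q i' q * h (colmask (psi beta [set j]) q).
Proof.
move=> t_gt0 privQ i i'; apply: eq_sum_mul_comp => M.
under eq_bigl do rewrite -agree_on_colmask.
under [RHS]eq_bigl do rewrite -agree_on_colmask.
by apply: privQ; rewrite cards1.
Qed.

Theorem lemma9 (F : finFieldType) (R : realFieldType) (n m alpha beta t : nat)
  (Q : 'I_m -> {ffun 'M[F]_(alpha * m, beta * n) -> R}) :
  (forall i, is_dist (Q i)) ->
  (1 <= t)%N ->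
  t_private t Q ->
  forall (i i' : 'I_m) (Fs : {set 'I_m}),
    exp_colsupp (Q i) Fs = exp_colsupp (Q i') Fs.
Proof.
move=> _ t_gt0 privQ i i' Fs.
rewrite !exp_colsupp_servers; apply: eq_bigr => j _.
exact: (t_private_server_view j (fun u => (#|colsupp (psi alpha Fs) u|)%:R) t_gt0 privQ).
Qed.
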